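(* Let $I(z)$ be a nonzero homogeneous polynomial solution of degree $d$ of the KZ system over $\mathbb{F}_p$. Then $d\equiv\sum_{j=1}^nM_j\pmod p$.
   Context: Let $p,q$ be primes and $n$ a positive integer with $p>n\ge2$, $p>q$. Fix positive integers $m_1,\dots,m_n<q$; $M_i$ is the least positive integer with $M_i\equiv -m_iq^{-1}\pmod p$. For $i\ne j$ let $\Omega_{ij}$ be the $n\times n$ matrix with only nonzero entries $(\Omega_{ij})_{ii}=-m_j$, $(\Omega_{ij})_{ij}=m_j$, $(\Omega_{ij})_{ji}=m_i$, $(\Omega_{ij})_{jj}=-m_i$. A polynomial solution of the KZ system over $\mathbb{F}_p$ is $I=(I_1,\dots,I_n)\in\mathbb{F}_p[z_1,\dots,z_n]^n$ with $\partial I/\partial z_i=q^{-1}\sum_{j\ne i}\Omega_{ij}I/(z_i-z_j)$ for all $i$ and $\sum_im_iI_i=0$ (computed in $\mathbb{F}_p$). *)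

From HB Require Import structures.
From mathcomp Require Import all_boot all_order all_algebra.
From mathcomp Require Import fraction.
From mathcomp Require Import mpoly.
Set Implicit Arguments. Unset Strict Implicit. Unset Printing Implicit Defensive.
Import GRing.Theory.
Local Open Scope ring_scope.

Notation polyFp p n := {mpoly 'F_p[n]}.
Notation fracFp p n := {fraction {mpoly 'F_p[n]}}.

Definition Omega (p n : nat) (m : 'I_n -> nat) (i j : 'I_n) : 'M['F_p]_n :=
  \matrix_(a < n, b < n)
    if (a == i) && (b == i) then - (m j)%:R
    else if (a == i) && (b == j) then (m j)%:R
    else if (a == j) && (b == i) then (m i)%:R
    else if (a == j) && (b == j) then - (m i)%:R
    else 0.

Definition Omega_act (p n : nat) (m : 'I_n -> nat) (i j : 'I_n)
    (I : 'I_n -> polyFp p n) (k : 'I_n) : polyFp p n :=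
  \sum_(l < n) Omega p m i j k l *: I l.

Definition KZ_poly_solution (p q n : nat) (m : 'I_n -> nat)
    (I : 'I_n -> polyFp p n) : Prop :=
  (forall i k : 'I_n,
     tofrac (mderiv i (I k)) =
       tofrac (((q%:R : 'F_p)^-1)%:MP) *
       \sum_(j < n | j != i)
          tofrac (Omega_act m i j I k) / tofrac ('X_i - 'X_j))
  /\ \sum_(i < n) (m i)%:R *: I i = 0.

From HB Require Import structures.
From mathcomp Require Import all_boot all_order all_algebra.
From mathcomp Require Import fraction.
From mathcomp Require Import mpoly.
From mathcomp Require Import zify ring.
Import GRing.Theory.
Local Open Scope ring_scope.

(* Euler's identity [sum_i z_i dI/dz_i = d I] for homogeneous [I], combined with
   the KZ equations, gives [d I_k = q^-1 sum_(i <> j) z_i (Omega_ij I)_k / (z_i - z_j)].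
   As [Omega_ij = Omega_ji], symmetrizing in [(i, j)] cancels the denominators:
   [2 d I_k = q^-1 sum_(i <> j) (Omega_ij I)_k], and the relation
   [sum_i m_i I_i = 0] collapses the right-hand side to [-2 q^-1 (sum_j m_j) I_k].
   At a nonzero [I_k] this yields [d = - q^-1 sum_j m_j = sum_j M_j] in [F_p],
   where [2] is invertible because [p > n >= 2]. *)

Lemma mulX_mderivX {R : comNzRingType} {n} (i : 'I_n) (m : 'X_{1..n}) :
  'X_i * ('X_[m] : {mpoly R[n]})^`M(i) = (m i)%:R *: 'X_[m].
Proof.
rewrite mderivX -scalerAr.
case: (m i =P 0)%N => [->|mi]; first by rewrite !scale0r.
rewrite -mpolyXD; congr (_ *: 'X_[_]); apply/mnmP => l.
rewrite mnmDE mnmBE mnm1E; case: eqP => [<-|_]; lia.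
Qed.

Lemma sum_mulX_mderiv_homog {R : comNzRingType} {n d} {P : {mpoly R[n]}} :
  P \is d.-homog -> \sum_i 'X_i * P^`M(i) = d%:R *: P.
Proof.
move=> /dhomogP hP; rewrite {1 2}(mpolyE P).
under eq_bigr => i _ do rewrite raddf_sum mulr_sumr.
rewrite exchange_big scaler_sumr big_seq [RHS]big_seq; apply: eq_bigr => m mP.
under eq_bigr => i _ do rewrite /= mderivZ -scalerAr mulX_mderivX.
by rewrite -scaler_sumr -scaler_suml -natr_sum -mdegE hP // scalerA mulrC -scalerA.
Qed.

Lemma mpolyX_eq {R : nzRingType} {n} (i j : 'I_n) :
  ('X_i == 'X_j :> {mpoly R[n]}) = (i == j).
Proof.
apply/eqP/eqP => [/(congr1 (mcoeff U_(i)))|-> //].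
rewrite !mcoeffXU eqxx; case: eqVneq => // _ /eqP.
by rewrite oner_eq0.
Qed.

Lemma exchange_big_neq {V : nmodType} {n} (F : 'I_n -> 'I_n -> V) :
  \sum_i \sum_(j | j != i) F i j = \sum_i \sum_(j | j != i) F j i.
Proof.
under eq_bigr => i _ do rewrite big_mkcond /=.
rewrite exchange_big /=; apply: eq_bigr => i _.
by rewrite [RHS]big_mkcond /=; apply: eq_bigr => j _; rewrite eq_sym.
Qed.

Lemma sum_sym_div_sub {F : fieldType} {n} (x : 'I_n -> F) (a : 'I_n -> 'I_n -> F) :
  (forall i j, i != j -> x i != x j) -> (forall i j, i != j -> a i j = a j i) ->
  (\sum_i \sum_(j | j != i) x i * a i j / (x i - x j)) *+ 2
    = \sum_i \sum_(j | j != i) a i j.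
Proof.
move=> x_inj a_sym; rewrite mulr2n {2}exchange_big_neq -big_split /=.
apply: eq_bigr => i _; rewrite -big_split /=; apply: eq_bigr => j ji.
have ij : i != j by rewrite eq_sym.
rewrite -(a_sym _ _ ij); field.
by rewrite !subr_eq0 x_inj // eq_sym x_inj.
Qed.

Section Omega.

Variables (p n : nat) (m : 'I_n -> nat).

Lemma Omega_sym i j : i != j -> Omega p m i j = Omega p m j i.
Proof.
move=> ij; apply/matrixP => a b; rewrite !mxE.
have ji : j != i by rewrite eq_sym.
have [->|ai] := eqVneq a i; have [->|bi] := eqVneq b i;
  by rewrite ?eqxx ?(negbTE ij) ?(negbTE ji) ?(negbTE ai) ?(negbTE bi) ?andbF ?andbT.
Qed.

Lemma Omega_actE i j (I : 'I_n -> polyFp p n) k : i != j ->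
  Omega_act m i j I k =
    (if k == i then (m j)%:R *: (I j - I i) else 0) +
    (if k == j then (m i)%:R *: (I i - I j) else 0).
Proof.
move=> ij; have ji : j != i by rewrite eq_sym.
rewrite /Omega_act (bigD1 i) //= (bigD1 j) //= big1 => [|l /andP[li lj]]; last first.
  by rewrite mxE (negbTE li) (negbTE lj) !andbF scale0r.
rewrite !mxE !eqxx (negbTE ij) (negbTE ji) !andbT !andbF addr0.
have [->|ki] := eqVneq k i; first by rewrite (negbTE ij) addr0 scalerBr scaleNr addrC.
have [_|kj] := eqVneq k j; first by rewrite add0r scalerBr scaleNr.
by rewrite !scale0r !addr0.
Qed.

Lemma sum_Omega_act (I : 'I_n -> polyFp p n) k :
  \sum_i (m i)%:R *: I i = 0 ->
  \sum_i \sum_(j | j != i) Omega_act m i j I k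
    = (- ((\sum_j (m j)%:R) *: I k)) *+ 2.
Proof.
move=> mI0; pose g i j := if k == i then (m j)%:R *: (I j - I i) else 0.
have -> : \sum_i \sum_(j | j != i) Omega_act m i j I k
          = \sum_i \sum_(j | j != i) (g i j + g j i).
  by apply: eq_bigr => i _; apply: eq_bigr => j ji; rewrite Omega_actE // eq_sym.
under eq_bigr => i _ do rewrite big_split /=.
rewrite big_split /= -(exchange_big_neq g) -mulr2n (bigD1 k) //=.
rewrite [X in _ + X]big1 => [|i ik]; last first.
  by rewrite big1 // => j _; rewrite /g eq_sym (negbTE ik).
rewrite addr0 /g eqxx; congr (_ *+ 2).
have -> : \sum_(j | j != k) (m j)%:R *: (I j - I k) = \sum_j (m j)%:R *: (I j - I k).
  by rewrite [RHS](bigD1 k) //= subrr scaler0 add0r.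
rewrite (eq_bigr (fun j => (m j)%:R *: I j - (m j)%:R *: I k)) => [|j _]; last first.
  by rewrite scalerBr.
by rewrite sumrB mI0 sub0r scaler_suml.
Qed.

End Omega.

Lemma KZ_homog_degree {p q n} {m : 'I_n -> nat} {I : 'I_n -> polyFp p n} {d k} :
  (2%:R : 'F_p) != 0 -> KZ_poly_solution q m I -> I k \is d.-homog -> I k != 0 ->
  (d%:R : 'F_p) = - (\sum_j (m j)%:R) / q%:R.
Proof.
move=> two_neq0 [KZ mI0] homIk Ik_neq0.
pose c := tofrac ((q%:R : 'F_p)^-1%:MP : polyFp p n).
pose x i := tofrac ('X_i : polyFp p n).
pose a i j := tofrac (Omega_act m i j I k).
have euler : tofrac (d%:R *: I k) = c * \sum_i \sum_(j | j != i) x i * a i j / (x i - x j).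
  rewrite -(sum_mulX_mderiv_homog homIk) rmorph_sum mulr_sumr; apply: eq_bigr => i _.
  rewrite rmorphM /= KZ mulrCA mulr_sumr; congr (_ * _).
  by apply: eq_bigr => j _; rewrite tofracB mulrA.
have x_inj i j : i != j -> x i != x j by rewrite tofrac_eq mpolyX_eq.
have a_sym i j : i != j -> a i j = a j i by move=> ij; rewrite /a /Omega_act Omega_sym.
have doubled : tofrac (d%:R *: I k *+ 2)
             = tofrac ((q%:R : 'F_p)^-1%:MP * (- ((\sum_j (m j)%:R) *: I k) *+ 2)).
  rewrite rmorphMn /= euler -mulrnAr sum_sym_div_sub // -sum_Omega_act // rmorphM.
  by rewrite rmorph_sum; congr (_ * _); apply: eq_bigr => i _; rewrite rmorph_sum.
move/eqP: doubled; rewrite tofrac_eq mul_mpolyC -scaleNr.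
rewrite (scalerMnl (d%:R : 'F_p)) (scalerMnl (- _ : 'F_p)) scalerA.
rewrite -subr_eq0 -scalerBl scaler_eq0 (negbTE Ik_neq0) orbF subr_eq0 mulrnAr.
rewrite -(mulr_natr (d%:R : 'F_p)) -(mulr_natr (_ * _)) => /eqP /(mulIf two_neq0) ->.
by rewrite mulrC.
Qed.

Lemma natr_Fp_eq p a b : prime p -> ((a%:R : 'F_p) == b%:R) = (a == b %[mod p]).
Proof.
move=> p_prime; apply/eqP/eqP => [/(congr1 val)|E]; first by rewrite /= !val_Fp_nat.
by rewrite -(Fp_nat_mod p_prime) E Fp_nat_mod.
Qed.

Theorem corollary5p5 (p q n : nat) (m M : 'I_n -> nat)
    (I : 'I_n -> {mpoly 'F_p[n]}) (d : nat) :
  prime p -> prime q -> (2 <= n)%N -> (n < p)%N -> (q < p)%N ->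
  (forall i, 0 < m i < q)%N ->
  (* M_i is the least positive integer with M_i = - m_i q^{-1} (mod p) *)
  (forall i, 0 < M i)%N ->
  (forall i, (M i)%:R = - (m i)%:R / (q%:R : 'F_p)) ->
  (forall i k, (0 < k)%N -> k%:R = - (m i)%:R / (q%:R : 'F_p) -> (M i <= k)%N) ->
  @KZ_poly_solution p q n m I ->
  (exists k, I k != 0) ->
  (forall k, I k \is d.-homog) ->
  d = (\sum_(j < n) M j)%N %[mod p].
Proof.
move=> p_prime _ two_le_n n_lt_p _ _ _ M_def _ KZ [k Ik_neq0] homI.
have two_neq0 : (2%:R : 'F_p) != 0.
  by rewrite -(mulr0n 1) natr_Fp_eq // mod0n modn_small ?(leq_ltn_trans two_le_n n_lt_p).
apply/eqP; rewrite -natr_Fp_eq // (KZ_homog_degree two_neq0 KZ (homI k) Ik_neq0).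
rewrite natr_sum; under eq_bigr do rewrite M_def.
by rewrite -mulr_suml sumrN.
Qed.
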